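(* Let $S$ be a memory system satisfying the Causality assumption, let $n,m,v\ge1$, and let $\Omega$ be a witness for $S(n,m,v)$. For every unambiguous trace $\tau$ of $S(n,m,v)$ and every location $1\le i\le m$, the relation $\Omega^e(\tau,i)$ is a (strict) partial order on $L(\tau,i)$, i.e. it is irreflexive, antisymmetric and transitive.
   Context: Notation: $\mathbb{N}_n=\{1,\dots,n\}$, $\mathbb{W}_n=\{0,\dots,n\}$. Memory events $E(n,m,v)=\{R,W\}\times\mathbb{N}_n\times\mathbb{N}_m\times\mathbb{W}_v$; for $e=\langle a,b,c,d\rangle$, $op(e)=a$, $proc(e)=b$, $loc(e)=c$, $data(e)=d$; $0$ models the initial value of every location. A memory system is a family $S=(S(n,m,v))_{n,m,v\ge1}$, $S(n,m,v)$ a regular set of finite runs over an alphabet $E^a(n,m,v)\supseteq E(n,m,v)$ (other letters are internal events). The trace of a run is its subsequence of memory events; traces of $S(n,m,v)$ are traces of its runs. For a sequence $\tau$ of memory events: $L(\tau,j)=\{k: loc(\tau(k))=j\}$, $L^w(\tau,j)=\{k\in L(\tau,j): op(\tau(k))=W\}$, $L^r(\tau,j)=\{k\in L(\tau,j): op(\tau(k))=R\}$. A trace $\tau$ is unambiguous if for every location $j$ and $x\in L^w(\tau,j)$, $data(\tau(x))\ne0$ and $data(\tau(x))\ne data(\tau(y))$ for all $y\in L^w(\tau,j)\setminus\{x\}$. Causality assumption: for all $n,m,v\ge1$, every trace $\tau$ of $S(n,m,v)$, every location $j$ and every $x\in L^r(\tau,j)$, either $data(\tau(x))=0$ or there is $y\in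 L^w(\tau,j)$ with $data(\tau(x))=data(\tau(y))$. A witness $\Omega$ for $S(n,m,v)$ assigns to every trace $\tau$ of $S(n,m,v)$ and location $j$ a strict total order $\Omega(\tau,j)$ on $L^w(\tau,j)$. For an unambiguous trace $\tau$, the relation $\Omega^e(\tau,j)\subseteq L(\tau,j)\times L(\tau,j)$ is defined by: $\langle x,y\rangle\in\Omega^e(\tau,j)$ iff (1) $data(\tau(x))=data(\tau(y))$, $op(\tau(x))=W$ and $op(\tau(y))=R$; or (2) $data(\tau(x))=0$ and $data(\tau(y))\ne0$; or (3) there are $a,b\in L^w(\tau,j)$ with $\langle a,b\rangle\in\Omega(\tau,j)$, $data(\tau(a))=data(\tau(x))$ and $data(\tau(b))=data(\tau(y))$. *)

From mathcomp Require Import all_boot.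
Set Implicit Arguments. Unset Strict Implicit. Unset Printing Implicit Defensive.

Inductive op_kind := Rd | Wr.

(* A memory event <op, proc, loc, data> of E(n,m,v).
   proc : 'I_n encodes N_n = {1..n} shifted by one (value p encodes p+1);
   loc  : 'I_m encodes N_m = {1..m} shifted by one;
   data : 'I_v.+1 is W_v = {0..v} exactly (0 = initial value). *)
Record mem_event (n m v : nat) := MemEvent {
  op : op_kind; proc : 'I_n; loc : 'I_m; data : 'I_v.+1 }.

Definition regular (A : Type) (Lang : seq A -> Prop) : Prop :=
  exists (Q : finType) (q0 : Q) (d : Q -> A -> Q) (F : pred Q),
    forall w, Lang w <-> F (foldl d q0 w).

(* Runs are words over the alphabet E^a(n,m,v) = E(n,m,v) + internal letters
   (Int n m v : finType).  The trace of a run is its subsequence of memory events. *)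
Definition trace (n m v : nat) (I : Type) (r : seq (mem_event n m v + I)) :
  seq (mem_event n m v) :=
  pmap (fun a => match a with inl e => Some e | inr _ => None end) r.

Definition is_trace (Int : nat -> nat -> nat -> finType)
  (S : forall n m v, seq (mem_event n m v + Int n m v) -> Prop)
  (n m v : nat) (tau : seq (mem_event n m v)) : Prop :=
  exists r, S n m v r /\ trace r = tau.

(* Positions are 0-based indices into the trace. *)
Section Positions.
Variables (n m v : nat) (tau : seq (mem_event n m v)).

Definition inL (j : 'I_m) (k : nat) : Prop :=
  exists e, onth tau k = Some e /\ loc e = j.
Definition inLw (j : 'I_m) (k : nat) : Prop :=
  exists e, onth tau k = Some e /\ loc e = j /\ op e = Wr.
Definition inLr (j : 'I_m) (k : nat) : Prop :=
  exists e, onth tau k = Some e /\ loc e = j /\ op e = Rd.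

(* data(tau(k)) as a natural number (only meaningful for k < size tau). *)
Definition dat (k : nat) : nat :=
  match onth tau k with Some e => nat_of_ord (data e) | None => 0 end.
Definition opk (k : nat) : option op_kind :=
  match onth tau k with Some e => Some (op e) | None => None end.

Definition unambiguous : Prop :=
  forall (j : 'I_m) x, inLw j x ->
    dat x <> 0 /\ (forall y, inLw j y -> y <> x -> dat x <> dat y).
End Positions.

Definition causality (Int : nat -> nat -> nat -> finType)
  (S : forall n m v, seq (mem_event n m v + Int n m v) -> Prop) : Prop :=
  forall n m v, 1 <= n -> 1 <= m -> 1 <= v ->
  forall tau, @is_trace Int S n m v tau ->
  forall (j : 'I_m) x, inLr tau j x ->
    dat tau x = 0 \/ exists y, inLw tau j y /\ dat tau x = dat tau y.

Definition strict_total_on (P : nat -> Prop) (R : nat -> nat -> Prop) : Prop :=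
  (forall x y, R x y -> P x /\ P y) /\
  (forall x, ~ R x x) /\
  (forall x y z, R x y -> R y z -> R x z) /\
  (forall x y, P x -> P y -> x <> y -> R x y \/ R y x).

Definition is_witness (Int : nat -> nat -> nat -> finType)
  (S : forall n m v, seq (mem_event n m v + Int n m v) -> Prop) (n m v : nat)
  (Omega : seq (mem_event n m v) -> 'I_m -> nat -> nat -> Prop) : Prop :=
  forall tau, @is_trace Int S n m v tau ->
  forall j : 'I_m, strict_total_on (inLw tau j) (Omega tau j).

Definition Omega_e (n m v : nat)
  (Omega : seq (mem_event n m v) -> 'I_m -> nat -> nat -> Prop)
  (tau : seq (mem_event n m v)) (j : 'I_m) (x y : nat) : Prop :=
  inL tau j x /\ inL tau j y /\
  ( (dat tau x = dat tau y /\ opk tau x = Some Wr /\ opk tau y = Some Rd)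
  \/ (dat tau x = 0 /\ dat tau y <> 0)
  \/ (exists a b, inLw tau j a /\ inLw tau j b /\ Omega tau j a b /\
                  dat tau a = dat tau x /\ dat tau b = dat tau y) ).

Definition strict_partial_order_on (P : nat -> Prop) (R : nat -> nat -> Prop) : Prop :=
  (forall x, P x -> ~ R x x) /\
  (forall x y, P x -> P y -> R x y -> R y x -> x = y) /\
  (forall x y z, P x -> P y -> P z -> R x y -> R y z -> R x z).

(* Omega^e(tau,i) is the lexicographic order on pairs (data, op): values are
   compared first, with the initial value 0 below every written value and two
   written values ordered as their (unique, by unambiguity) writes are ordered
   by Omega; on equal values a write precedes a read.  Unambiguity makes the
   value order a transport of the strict order Omega, so it is irreflexive and
   transitive, and so is its lexicographic refinement. *)

From mathcomp Require Import all_boot.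

Set Implicit Arguments.
Unset Strict Implicit.
Unset Printing Implicit Defensive.

Lemma irrefl_trans_strict_partial_order (P : nat -> Prop) (R : nat -> nat -> Prop) :
  (forall x, ~ R x x) -> (forall x y z, R x y -> R y z -> R x z) ->
  strict_partial_order_on P R.
Proof.
move=> R_irrefl R_trans; split; [|split] => [x _ | x y _ _ Rxy Ryx | x y z _ _ _].
- exact: R_irrefl.
- by case: (R_irrefl x); apply: R_trans Rxy Ryx.
- exact: R_trans.
Qed.

Section LexOrder.

Variables (T K : Type) (key : T -> K) (tag : T -> option op_kind) (lt : K -> K -> Prop).
Hypothesis lt_irrefl : forall k, ~ lt k k.
Hypothesis lt_trans : forall k1 k2 k3, lt k1 k2 -> lt k2 k3 -> lt k1 k3.

Definition lex_lt (x y : T) : Prop :=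
  (key x = key y /\ tag x = Some Wr /\ tag y = Some Rd) \/ lt (key x) (key y).

Lemma lex_lt_irrefl x : ~ lex_lt x x.
Proof. by case=> [[_ []] -> []|/lt_irrefl]. Qed.

Lemma lex_lt_trans x y z : lex_lt x y -> lex_lt y z -> lex_lt x z.
Proof.
case=> [[exy [tx ty]]|lxy] [[eyz [ty' tz]]|lyz].
- by rewrite ty in ty'.
- by right; rewrite exy.
- by right; rewrite -eyz.
- by right; apply: lt_trans lxy lyz.
Qed.

End LexOrder.

Section ValueOrder.

Variables (n m v : nat) (tau : seq (mem_event n m v)) (j : 'I_m).
Hypothesis tau_unamb : unambiguous tau.

Lemma unambiguous_write_inj {a b} :
  inLw tau j a -> inLw tau j b -> dat tau a = dat tau b -> a = b.
Proof.
move=> wa wb eab; case: (eqVneq b a) => [-> // | /eqP nba].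
by case: (@tau_unamb j a wa) => _ /(_ b wb nba); rewrite eab.
Qed.

Lemma unambiguous_write_neq0 a : inLw tau j a -> dat tau a <> 0.
Proof. by case/(@tau_unamb j a). Qed.

Variable W : nat -> nat -> Prop.
Hypothesis W_irrefl : forall a, ~ W a a.
Hypothesis W_trans : forall a b c, W a b -> W b c -> W a c.

Definition written_before (d d' : nat) : Prop :=
  exists a b, inLw tau j a /\ inLw tau j b /\ W a b /\ dat tau a = d /\ dat tau b = d'.

Definition value_lt (d d' : nat) : Prop := (d = 0 /\ d' <> 0) \/ written_before d d'.

Lemma written_before_neq0 {d d'} : written_before d d' -> d' <> 0.
Proof. by case=> a [b [_ [wb [_ [_ <-]]]]]; apply: unambiguous_write_neq0. Qed.

Lemma value_lt_irrefl d : ~ value_lt d d.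
Proof.
case=> [[-> //] | [a [b [wa [wb [Wab [<- eb]]]]]]].
by move: Wab; rewrite (unambiguous_write_inj wa wb (esym eb)); apply: W_irrefl.
Qed.

Lemma value_lt_trans d1 d2 d3 : value_lt d1 d2 -> value_lt d2 d3 -> value_lt d1 d3.
Proof.
case=> [[-> nz2] | bf12] [[z2 nz3] | bf23].
- by [].
- by left; split=> //; apply: written_before_neq0 bf23.
- by case: (written_before_neq0 bf12).
- case: bf12 bf23 => [a [b [wa [wb [Wab [ea eb]]]]]] [a' [b' [wa' [wb' [Wab' [ea' eb']]]]]].
  have eba' : b = a' by apply: unambiguous_write_inj => //; rewrite eb ea'.
  right; exists a, b'; split=> //; split=> //; split=> //.
  by apply: W_trans Wab _; rewrite eba'.
Qed.

End ValueOrder.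

Lemma Omega_eE n m v (Omega : seq (mem_event n m v) -> 'I_m -> nat -> nat -> Prop)
    tau (j : 'I_m) x y :
  Omega_e Omega tau j x y <->
  inL tau j x /\ inL tau j y /\
  lex_lt (dat tau) (opk tau) (value_lt tau j (Omega tau j)) x y.
Proof. by []. Qed.

Theorem lemma5p2 (Int : nat -> nat -> nat -> finType)
  (S : forall n m v, seq (mem_event n m v + Int n m v) -> Prop)
  (HSreg : forall n m v, 1 <= n -> 1 <= m -> 1 <= v -> regular (S n m v))
  (Hcaus : @causality Int S)
  (n m v : nat) (hn : 1 <= n) (hm : 1 <= m) (hv : 1 <= v)
  (Omega : seq (mem_event n m v) -> 'I_m -> nat -> nat -> Prop)
  (HOmega : @is_witness Int S n m v Omega) :
  forall tau, @is_trace Int S n m v tau -> unambiguous tau ->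
  forall i : 'I_m, strict_partial_order_on (inL tau i) (Omega_e Omega tau i).
Proof.
move=> tau tau_trace tau_unamb i.
have [_ [Omega_irrefl [Omega_trans _]]] := HOmega tau tau_trace i.
have value_irrefl := value_lt_irrefl (j := i) tau_unamb Omega_irrefl.
have value_trans := value_lt_trans (j := i) tau_unamb Omega_trans.
apply: irrefl_trans_strict_partial_order => [x | x y z].
- by case/Omega_eE=> _ [_]; apply: lex_lt_irrefl value_irrefl _.
- case/Omega_eE=> Lx [_ lxy] /Omega_eE [_ [Lz lyz]].
  by apply/Omega_eE; split=> //; split=> //; apply: lex_lt_trans value_trans _ _ _ lxy lyz.
Qed.
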